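(* Let $f\colon\mathbb{Z}_p^r\to\mathbb{Q}_p$ be a continuous function such that $f(\overline{x})\neq 0$ for all $\overline{x}\in\mathbb{Z}_p^r$. Then $R(f)$ is not dense in $\mathbb{Q}_p$.
   Context: For a function $f$ on $\mathbb{Z}_p^r$, $R(f)=\{f(\overline{x})/f(\overline{y}) : \overline{x},\overline{y}\in\mathbb{Z}^r,\ f(\overline{y})\neq 0\}$; density is in the $p$-adic topology. *)

From HB Require Import structures.
From mathcomp Require Import all_boot all_order all_algebra.
Set Implicit Arguments. Unset Strict Implicit. Unset Printing Implicit Defensive.
Import Order.TTheory GRing.Theory Num.Theory.
Local Open Scope ring_scope.

Definition padic_abs (p : nat) (q : rat) : rat :=
  if q == 0 then 0
  else (p%:R : rat) ^ ((logn p `|denq q|%N)%:Z - (logn p `|numq q|%N)%:Z).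

Record is_Qp (p : nat) (K : fieldType) (N : K -> rat) : Prop := {
  Qp_prime : prime p;
  Qp_N0 : forall x, N x = 0 <-> x = 0;
  Qp_Nge0 : forall x, 0 <= N x;
  Qp_NM : forall x y, N (x * y) = N x * N y;
  Qp_ultra : forall x y, N (x + y) <= Num.max (N x) (N y);
  Qp_Nrat : forall q : rat, N (ratr q) = padic_abs p q;
  Qp_dense : forall (x : K) (e : rat), 0 < e -> exists q : rat, N (x - ratr q) < e;
  Qp_complete : forall u : nat -> K,
    (forall e : rat, 0 < e -> exists n0, forall m n, (n0 <= m)%N -> (n0 <= n)%N ->
        N (u m - u n) < e) ->
    exists l : K, forall e : rat, 0 < e -> exists n0, forall n, (n0 <= n)%N ->
        N (u n - l) < e
}.

Arguments is_Qp : clear implicits.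

Definition in_Zpr (K : fieldType) (N : K -> rat) (r : nat) (x : 'I_r -> K) : Prop :=
  forall i, N (x i) <= 1.

(* continuity on Z_p^r (product topology = sup-norm topology) *)
Definition continuous_on_Zpr (K : fieldType) (N : K -> rat) (r : nat)
    (f : ('I_r -> K) -> K) : Prop :=
  forall x, in_Zpr N x -> forall e : rat, 0 < e -> exists d : rat, 0 < d /\
    forall y, in_Zpr N y -> (forall i, N (y i - x i) < d) -> N (f y - f x) < e.

Definition int_pt (K : fieldType) (r : nat) (x : 'I_r -> int) : 'I_r -> K :=
  fun i => (x i)%:~R.

Definition Rset (K : fieldType) (r : nat) (f : ('I_r -> K) -> K) (z : K) : Prop :=
  exists (x y : 'I_r -> int), f (int_pt K y) <> 0 /\ z = f (int_pt K x) / f (int_pt K y).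

Definition dense_in_Qp (K : fieldType) (N : K -> rat) (S : K -> Prop) : Prop :=
  forall (a : K) (e : rat), 0 < e -> exists z, S z /\ N (z - a) < e.

From mathcomp Require Import all_boot all_order all_algebra.
From mathcomp Require Import ring.
From Stdlib Require Import Classical ClassicalEpsilon.
Set Implicit Arguments. Unset Strict Implicit. Unset Printing Implicit Defensive.
Import Order.TTheory GRing.Theory Num.Theory.
Local Open Scope ring_scope.

(* Since f does not vanish and the absolute value is ultrametric, |f| is
   locally constant on Z_p^r.  A locally constant function on Z_p^r is bounded
   on Z^r by compactness: were it unbounded, it would stay unbounded on a
   nested sequence of residue classes modulo p^k, k = 0, 1, ..., and it is
   constant near the p-adic limit of their centres.  So |f| and 1/|f| are
   bounded on Z^r, whence |f(x)/f(y)| stays away from 0 on R(f). *)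

Definition ppowN (p k : nat) : rat := ((p%:R : rat) ^+ k)^-1.

Section PrimePowers.
Variable p : nat.
Hypothesis p_prime : prime p.

Lemma ppowN_gt0 k : 0 < ppowN p k.
Proof. by rewrite invr_gt0 exprn_gt0 // ltr0n prime_gt0. Qed.

Lemma ppowN_le k m : (k <= m)%N -> ppowN p m <= ppowN p k.
Proof.
move=> le_km; rewrite lef_pV2 ?posrE ?exprn_gt0 ?ltr0n ?prime_gt0 //.
by rewrite ler_eXn2l // ltr1n prime_gt1.
Qed.

Lemma ppowN_small (e : rat) : 0 < e -> exists k, ppowN p k < e.
Proof.
move=> e_gt0; exists (Num.Def.archi_bound e^-1).
have e_lt : e^-1 < (Num.Def.archi_bound e^-1)%:R by rewrite archi_boundP // invr_ge0 ltW.
rewrite /ppowN invf_plt ?posrE ?exprn_gt0 ?ltr0n ?prime_gt0 //.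
apply: (lt_le_trans e_lt); rewrite -natrX ler_nat ltnW // ltn_expl // prime_gt1 //.
Qed.

Lemma padic_abs_int (z : int) : z != 0 ->
  padic_abs p z%:~R = ppowN p (logn p `|z|).
Proof.
move=> z_neq0; rewrite /padic_abs intr_eq0 (negbTE z_neq0) numq_int denq_int.
by rewrite /= logn1 add0r -exprnN.
Qed.

End PrimePowers.

Section QpNorm.
Variables (p : nat) (K : fieldType) (N : K -> rat).
Hypothesis HK : is_Qp p K N.

Let p_prime := Qp_prime HK.

Lemma Qp_N1 : N 1 = 1.
Proof.
rewrite -[1 : K]/(1%:~R) -ratr_int (Qp_Nrat HK) padic_abs_int //.
by rewrite logn1 /ppowN expr0 invr1.
Qed.

Lemma Qp_NN x : N (- x) = N x.
Proof.
have NN1 : N (-1) = 1.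
  have : N (-1) ^+ 2 == 1 by rewrite expr2 -(Qp_NM HK) mulrNN mulr1 Qp_N1.
  rewrite sqrf_eq1 => /orP[/eqP //|/eqP NN1].
  by have := Qp_Nge0 HK (-1); rewrite NN1.
by rewrite -mulN1r (Qp_NM HK) NN1 mul1r.
Qed.

Lemma Qp_NV x : x != 0 -> N x^-1 = (N x)^-1.
Proof.
move=> x_neq0; have Nx_neq0 : N x != 0 by apply: contra x_neq0 => /eqP/(Qp_N0 HK)->.
by apply: (mulfI Nx_neq0); rewrite -(Qp_NM HK) !divff // Qp_N1.
Qed.

Lemma Qp_N_gt0 x : x != 0 -> 0 < N x.
Proof.
move=> x_neq0; rewrite lt_def (Qp_Nge0 HK) andbT.
by apply: contra x_neq0 => /eqP/(Qp_N0 HK)->.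
Qed.

Lemma Qp_N_add_le x y d : N x <= d -> N y <= d -> N (x + y) <= d.
Proof. by move=> Nx Ny; apply: le_trans (Qp_ultra HK x y) _; rewrite ge_max Nx Ny. Qed.

Lemma Qp_N_add_lt x y d : N x < d -> N y < d -> N (x + y) < d.
Proof. by move=> Nx Ny; apply: le_lt_trans (Qp_ultra HK x y) _; rewrite gt_max Nx Ny. Qed.

Lemma Qp_N_eq_of_lt x y : N (y - x) < N x -> N y = N x.
Proof.
move=> Nyx_lt; apply/eqP; rewrite eq_le; apply/andP; split.
  by rewrite -(subrK x y) Qp_N_add_le // ltW.
have := Qp_ultra HK y (- (y - x)); rewrite Qp_NN opprB addrC subrK.
by rewrite le_max => /orP[// | /(lt_le_trans Nyx_lt)]; rewrite ltxx.
Qed.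

Lemma Qp_N_int_dvd (z : int) k : ((p ^ k)%N%:Z %| z)%Z -> N z%:~R <= ppowN p k.
Proof.
rewrite -ratr_int (Qp_Nrat HK); have [-> _|z_neq0 dvd_z] := eqVneq z 0.
  by rewrite /padic_abs eqxx ltW // ppowN_gt0.
by rewrite padic_abs_int // ppowN_le // -pfactor_dvdn ?absz_gt0.
Qed.

Lemma Qp_N_int_le1 (z : int) : N z%:~R <= 1.
Proof. by have := @Qp_N_int_dvd z 0; rewrite /ppowN expr0 invr1 dvd1z; apply. Qed.

Lemma Qp_N_le1_near_int (z : int) x : N (z%:~R - x) <= 1 -> N x <= 1.
Proof.
by move=> near_x; rewrite -(subKr z%:~R x) Qp_N_add_le ?Qp_NN ?Qp_N_int_le1.
Qed.

Lemma in_Zpr_int_pt r (x : 'I_r -> int) : in_Zpr N (int_pt K x).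
Proof. by move=> i; apply: Qp_N_int_le1. Qed.

Lemma Qp_limit_congruent (u : nat -> int) :
  (forall m n, (m <= n)%N -> ((p ^ m)%N%:Z %| u n - u m)%Z) ->
  exists L : K, forall k, N ((u k)%:~R - L) <= ppowN p k.
Proof.
move=> cong.
have dist_le k m n : (k <= m)%N -> (k <= n)%N ->
    N ((u m)%:~R - (u n)%:~R) <= ppowN p k.
  move=> le_km le_kn; rewrite -intrB Qp_N_int_dvd //.
  have -> : u m - u n = (u m - u k) - (u n - u k) by ring.
  by rewrite rpredB ?cong.
have [L conv] : exists L : K, forall e, 0 < e ->
    exists n0, forall n, (n0 <= n)%N -> N ((u n)%:~R - L) < e.
  apply: (Qp_complete HK) => e e_gt0; have [k lt_e] := ppowN_small p_prime e_gt0.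
  by exists k => m n le_km le_kn; apply: le_lt_trans (dist_le k m n le_km le_kn) lt_e.
exists L => k; have [n0 near_L] := conv _ (ppowN_gt0 p_prime k).
rewrite -(subrK (u (maxn n0 k))%:~R (u k)%:~R) -addrA.
apply: Qp_N_add_le; first by rewrite dist_le ?leq_maxr.
by rewrite ltW ?near_L ?leq_maxl.
Qed.

End QpNorm.

Definition eqmod_vec (p k r : nat) (x c : 'I_r -> int) : Prop :=
  forall i, ((p ^ k)%N%:Z %| x i - c i)%Z.

Definition add_digits (p k r : nat) (c : 'I_r -> int) (t : {ffun 'I_r -> 'I_p}) :
  'I_r -> int := fun i => c i + (p ^ k)%N%:Z * (t i : nat)%:Z.

Section Congruences.
Variables (p r : nat).
Implicit Types (x c : 'I_r -> int).

Lemma eqmod_vec0 x c : eqmod_vec p 0 x c.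
Proof. by move=> i; rewrite dvd1z. Qed.

Lemma eqmod_vec_refl k c : eqmod_vec p k c c.
Proof. by move=> i; rewrite subrr dvdz0. Qed.

Lemma eqmod_vec_trans k m x y c : (k <= m)%N ->
  eqmod_vec p m x y -> eqmod_vec p k y c -> eqmod_vec p k x c.
Proof.
move=> le_km xy yc i; rewrite -(subrK (y i) (x i)) -addrA rpredD ?yc //.
by apply: dvdz_trans (xy i); rewrite dvdzE dvdn_exp2l.
Qed.

Lemma eqmod_vec_add_digits k c (t : {ffun 'I_r -> 'I_p}) :
  eqmod_vec p k (add_digits k c t) c.
Proof. by move=> i; rewrite /add_digits addrC addKr dvdz_mulr. Qed.

Lemma dvdz_digit k (z : int) : (0 < p)%N -> ((p ^ k)%N%:Z %| z)%Z ->
  exists t : 'I_p, ((p ^ k.+1)%N%:Z %| z - (p ^ k)%N%:Z * (t : nat)%:Z)%Z.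
Proof.
move=> p_gt0 /divzK; set q := (z %/ _)%Z => z_eq.
have p_neq0 : p%:Z != 0 by rewrite eqz_nat -lt0n.
have digit_lt : (`|(q %% p)%Z| < p)%N.
  by rewrite -ltz_nat gez0_abs ?modz_ge0 ?ltz_pmod ?ltz_nat.
exists (Ordinal digit_lt); apply/dvdzP; exists (q %/ p)%Z.
rewrite /= gez0_abs ?modz_ge0 // -z_eq {1}(divz_eq q p) expnS PoszM; ring.
Qed.

Lemma eqmod_vec_digits k x c : (0 < p)%N -> eqmod_vec p k x c ->
  exists t : {ffun 'I_r -> 'I_p}, eqmod_vec p k.+1 x (add_digits k c t).
Proof.
move=> p_gt0 xc; have /fin_all_exists[t t_digit] := fun i => dvdz_digit p_gt0 (xc i).
by exists [ffun i => t i] => i; rewrite /add_digits ffunE opprD addrA.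
Qed.

End Congruences.

Section Unbounded.
Variables (T : Type) (R : realDomainType) (phi : T -> R).

Definition bounded_on (S : T -> Prop) : Prop :=
  exists M, forall x, S x -> phi x <= M.

Definition unbounded_on (S : T -> Prop) : Prop :=
  forall M, exists x, S x /\ M < phi x.

Lemma bounded_onNunbounded S : bounded_on S <-> ~ unbounded_on S.
Proof.
split=> [[M bnd] unb | not_unb].
  by have [x [Sx]] := unb M; rewrite ltNge bnd.
apply: NNPP => not_bnd; apply: not_unb => M.
apply: NNPP => no_x; apply: not_bnd; exists M => x Sx.
by rewrite leNgt; apply/negP => lt_M; apply: no_x; exists x.
Qed.

Lemma unbounded_on_finite_cover (I : finType) (S : T -> Prop) (P : I -> T -> Prop) :
  (forall x, S x -> exists i, P i x) -> unbounded_on S ->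
  exists i, unbounded_on (P i).
Proof.
move=> cover unb; apply: NNPP => none.
have /fin_all_exists[M bnd] : forall i, bounded_on (P i).
  by move=> i; apply/bounded_onNunbounded => unb_i; apply: none; exists i.
have [x [Sx]] := unb (\sum_i `|M i|); have [i Pix] := cover x Sx.
apply/negP; rewrite -leNgt (le_trans (bnd i x Pix)) // (le_trans (ler_norm _)) //.
by rewrite (bigD1 i) //= lerDl sumr_ge0.
Qed.

End Unbounded.

Section NestedClasses.
Variables (p r : nat) (R : realDomainType) (phi : ('I_r -> int) -> R).
Hypothesis p_gt0 : (0 < p)%N.

Lemma unbounded_on_refine k c : unbounded_on phi (fun x => eqmod_vec p k x c) ->
  exists c', eqmod_vec p k c' c /\ unbounded_on phi (fun x => eqmod_vec p k.+1 x c').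
Proof.
move=> unb.
have [t unb_t] := unbounded_on_finite_cover
  (P := fun t x => eqmod_vec p k.+1 x (add_digits k c t))
  (fun x xc => eqmod_vec_digits p_gt0 xc) unb.
by exists (add_digits k c t); split; first exact: eqmod_vec_add_digits.
Qed.

Lemma unbounded_nested_classes : unbounded_on phi (fun _ => True) ->
  exists c : nat -> 'I_r -> int,
    (forall n, unbounded_on phi (fun x => eqmod_vec p n x (c n))) /\
    (forall m n, (m <= n)%N -> eqmod_vec p m (c n) (c m)).
Proof.
move=> unb.
have refine k c : exists c', unbounded_on phi (fun x => eqmod_vec p k x c) ->
    eqmod_vec p k c' c /\ unbounded_on phi (fun x => eqmod_vec p k.+1 x c').
  have [/unbounded_on_refine[c' ?]|not_unb] :=
    classic (unbounded_on phi (fun x => eqmod_vec p k x c)).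
    by exists c'.
  by exists c => /not_unb.
pose next k c := proj1_sig (constructive_indefinite_description _ (refine k c)).
pose fix seq_c n := if n is n'.+1 then next n' (seq_c n') else fun _ => 0.
have seq_cP n : unbounded_on phi (fun x => eqmod_vec p n x (seq_c n)) /\
    forall m, (m <= n)%N -> eqmod_vec p m (seq_c n) (seq_c m).
  elim: n => [|n [unb_n cong_n]].
    split=> [M | m]; last by rewrite leqn0 => /eqP->; apply: eqmod_vec_refl.
    by have [x [_ ?]] := unb M; exists x; split; first exact: eqmod_vec0.
  have [cong_next unb_next] :=
    proj2_sig (constructive_indefinite_description _ (refine n (seq_c n))) unb_n.
  split=> // m; rewrite leq_eqVlt => /orP[/eqP-> | ]; first exact: eqmod_vec_refl.
  by rewrite ltnS => le_mn; apply: eqmod_vec_trans le_mn cong_next (cong_n m le_mn).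
by exists seq_c; split=> [n | m n]; [case: (seq_cP n) | case: (seq_cP n) => _; apply].
Qed.

End NestedClasses.

Section LocallyConstant.
Variables (p : nat) (K : fieldType) (N : K -> rat) (r : nat).
Hypothesis HK : is_Qp p K N.

Definition locally_constant (T : Type) (phi : ('I_r -> K) -> T) : Prop :=
  forall x, in_Zpr N x -> exists2 d, 0 < d & forall y, in_Zpr N y ->
    (forall i, N (y i - x i) < d) -> phi y = phi x.

Lemma locally_constant_comp (T U : Type) (g : T -> U) (phi : ('I_r -> K) -> T) :
  locally_constant phi -> locally_constant (g \o phi).
Proof.
by move=> loc x /loc[d d_gt0 eq_phi]; exists d => // y Zy /(eq_phi y Zy) /= ->.
Qed.

Lemma locally_constant_bounded (phi : ('I_r -> K) -> rat) :
  locally_constant phi -> bounded_on (phi \o @int_pt K r) (fun _ => True).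
Proof.
have p_prime := Qp_prime HK.
move=> loc; apply/bounded_onNunbounded => unb.
have [c [unb_c cong_c]] := unbounded_nested_classes (prime_gt0 p_prime) unb.
have /fin_all_exists[L near_L] : forall i, exists L : K,
    forall k, N ((c k i)%:~R - L) <= ppowN p k.
  by move=> i; apply: (Qp_limit_congruent HK) => m n le_mn; apply: cong_c.
have ZL : in_Zpr N L.
  move=> i; apply: (Qp_N_le1_near_int HK (z := c 0%N i)).
  by have := near_L i 0%N; rewrite /ppowN expr0 invr1.
have [d d_gt0 eq_phi] := loc L ZL; have [k lt_d] := ppowN_small p_prime d_gt0.
have [x [cong_x]] := unb_c k (phi L).
rewrite /= (eq_phi _ (in_Zpr_int_pt HK x)) ?ltxx //.
move=> i; rewrite -(subrK (c k i)%:~R (int_pt K x i)) -addrA.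
by rewrite (Qp_N_add_lt HK) ?(le_lt_trans _ lt_d) // -intrB (Qp_N_int_dvd HK).
Qed.

Lemma norm_locally_constant (f : ('I_r -> K) -> K) :
  continuous_on_Zpr N f -> (forall x, in_Zpr N x -> f x <> 0) ->
  locally_constant (N \o f).
Proof.
move=> fcont fnz x Zx.
have [d [d_gt0 near_fx]] := fcont x Zx _ (Qp_N_gt0 HK (introN eqP (fnz x Zx))).
by exists d => // y Zy near_x; apply: (Qp_N_eq_of_lt HK); apply: near_fx.
Qed.

Lemma Rset_norm_bounded_below (f : ('I_r -> K) -> K) :
  continuous_on_Zpr N f -> (forall x, in_Zpr N x -> f x <> 0) ->
  exists2 e, 0 < e & forall z, Rset f z -> e <= N z.
Proof.
move=> fcont fnz; have loc := norm_locally_constant fcont fnz.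
have Nf_gt0 x : 0 < N (f (int_pt K x)).
  by apply: (Qp_N_gt0 HK); apply/eqP; exact/fnz/(in_Zpr_int_pt HK x).
have [M1 le_M1] := locally_constant_bounded loc.
have [M2 le_M2] := locally_constant_bounded (locally_constant_comp GRing.inv loc).
pose x0 (i : 'I_r) : int := 0.
have M1_gt0 : 0 < M1 by apply: lt_le_trans (Nf_gt0 x0) (le_M1 x0 I).
have M2_gt0 : 0 < M2 by apply: lt_le_trans (le_M2 x0 I); rewrite /= invr_gt0.
exists (M1 * M2)^-1; first by rewrite invr_gt0 mulr_gt0.
move=> _ [X [Y [fY_neq0 ->]]]; rewrite (Qp_NM HK) (Qp_NV HK); last exact/eqP.
rewrite invfM mulrC ler_pM ?invr_ge0 ?(ltW M1_gt0) ?(ltW M2_gt0) //.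
  by rewrite -[leRHS]invrK lef_pV2 ?posrE ?invr_gt0 ?le_M2.
by rewrite lef_pV2 ?posrE ?le_M1.
Qed.

End LocallyConstant.

Theorem lemma2p4 (p : nat) (K : fieldType) (N : K -> rat) (HK : is_Qp p K N)
    (r : nat) (f : ('I_r -> K) -> K)
    (fcont : continuous_on_Zpr N f)
    (fnz : forall x, in_Zpr N x -> f x <> 0) :
  ~ dense_in_Qp N (Rset f).
Proof.
move=> dense; have [e e_gt0 Rf_ge] := Rset_norm_bounded_below HK fcont fnz.
have [z [Rz]] := dense 0 e e_gt0.
by rewrite subr0 ltNge Rf_ge.
Qed.
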